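(* Let $\mathcal{L}$ be a propositional language and let $\mathcal{L}_1$ be an expansion of $\mathcal{L}$, with induced quantale embedding $i:\wp\Sigma_{\mathcal{L}}\to\wp\Sigma_{\mathcal{L}_1}$. Let $(D,\vdash)$ be a deductive system over $\mathcal{L}$ with associated nucleus $\gamma$ and $\wp\Sigma_{\mathcal{L}}$-module of theories $\mathrm{Th}$. Then $\mathrm{Th}$ is isomorphic to a $\wp\Sigma_{\mathcal{L}}$-submodule of $(\wp\Sigma_{\mathcal{L}_1}\otimes_{\wp\Sigma_{\mathcal{L}}}\mathrm{Th})_i$.
   Context: A quantale is a complete lattice $Q$ with a monoid structure $(Q,\cdot,1)$ whose product distributes over arbitrary joins on both sides. A left $Q$-module is a complete lattice $M$ with an action $Q\times M\to M$ that is associative, unital, and distributes over arbitrary joins in both arguments (right modules analogously); module homomorphisms preserve arbitrary joins and the action. A $Q$-module nucleus on $M$ is a closure operator $\gamma$ on $M$ with $a\gamma(u)\le\gamma(au)$; its image $M_\gamma$ is a $Q$-module with joins $\gamma(\bigvee\cdot)$ and action $a\cdot_\gamma u=\gamma(au)$. A propositional language $\mathcal{L}$ is a set of connectives with arities; fix a denumerable set $\mathrm{Var}$ of variables; $\mathit{Fm}_{\mathcal{L}}$ is the absolutely free $\mathcal{L}$-algebra over $\mathrm{Var}$, and $\Sigma_{\mathcal{L}}$ is the monoid (under composition) of its endomorphisms (substitutions). $\wp\Sigma_{\mathcal{L}}$ is the quantale of subsets of $\Sigma_{\mathcal{L}}$ with union as join, product $\Sigma\Sigma'=\{\sigma\sigma'\}$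 and unit $\{\mathrm{id}\}$. The domain $D$ of a deductive system is either $\mathit{Fm}_{\mathcal{L}}$, or $\mathit{Eq}=\mathit{Fm}_{\mathcal{L}}^2$, or $\mathit{Seq}_T=\bigcup_{(m,n)\in T}\mathit{Fm}_{\mathcal{L}}^m\times\mathit{Fm}_{\mathcal{L}}^n$ for some $T\subseteq\omega^2$; $\wp D$ is a left $\wp\Sigma_{\mathcal{L}}$-module with union as join and $\Sigma\cdot\Phi=\{\sigma(\varphi):\sigma\in\Sigma,\varphi\in\Phi\}$ (substitutions acting componentwise). A (structural) consequence relation $\vdash$ on $D$ (given by axioms and inference rules) corresponds to the $\wp\Sigma_{\mathcal{L}}$-module nucleus $\gamma(\Phi)=\{\psi:\Phi\vdash\psi\}$ on $\wp D$; its module of theories is $\mathrm{Th}=(\wp D)_\gamma$. An expansion $\mathcal{L}_1$ of $\mathcal{L}$ is a language containing all connectives of $\mathcal{L}$ with the same arities; $i$ sends $\Sigma\subseteq\Sigma_{\mathcal{L}}$ to the set of the unique $\mathcal{L}_1$-substitutions agreeing on $\mathrm{Var}$ with the elements of $\Sigma$. Via $i$, $\wp\Sigma_{\mathcal{L}_1}$ is a right $\wp\Sigma_{\mathcal{L}}$-module ($\Omega\cdot\Sigma=\Omega\, i(\Sigma)$). For a right $Q$-module $M_1$ and left $Q$-module $M_2$, the tensor product $M_1\otimes_Q M_2$ is the quotient of the free sup-lattice $\wp(M_1\times M_2)$ by the sup-lattice congruence generated by the pairs $(\{(\bigvee X,y)\},\bigcup_{x\in X}\{(x,y)\})$, $(\{(x,\bigvee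 Y)\},\bigcup_{y\in Y}\{(x,y)\})$, $(\{(xa,y)\},\{(x,ay)\})$; here $\wp\Sigma_{\mathcal{L}_1}\otimes_{\wp\Sigma_{\mathcal{L}}}\mathrm{Th}$ is a left $\wp\Sigma_{\mathcal{L}_1}$-module via left multiplication on the first factor. For a $\wp\Sigma_{\mathcal{L}_1}$-module $N$, $(N)_i$ denotes the $\wp\Sigma_{\mathcal{L}}$-module with the same sup-lattice and action $\Sigma\cdot u=i(\Sigma)u$. *)

From Stdlib Require Import List.
From Stdlib Require Vectors.Fin.

Record Lang := { conn : Type; arity : conn -> nat }.

Inductive Fm (L : Lang) : Type :=
| Var : nat -> Fm L
| App : forall c : conn L, (Fin.t (arity L c) -> Fm L) -> Fm L.
Arguments Var {L} _.
Arguments App {L} _ _.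

Definition is_endo {L : Lang} (s : Fm L -> Fm L) : Prop :=
  forall (c : conn L) (args : Fin.t (arity L c) -> Fm L),
    s (App c args) = App c (fun j => s (args j)).

Definition Subst (L : Lang) : Type := { s : Fm L -> Fm L | is_endo s }.
Definition app {L : Lang} (s : Subst L) : Fm L -> Fm L := proj1_sig s.

Definition SSet (L : Lang) : Type := Subst L -> Prop.

Definition sunion {L : Lang} (F : SSet L -> Prop) : SSet L :=
  fun s => exists X, F X /\ X s.

Definition sprod {L : Lang} (A B : SSet L) : SSet L :=
  fun t => exists s s', A s /\ B s' /\ forall f, app t f = app s (app s' f).

Record Expansion (L L1 : Lang) := {
  emb : conn L -> conn L1;
  emb_inj : forall c d, emb c = emb d -> c = d;
  emb_arity : forall c, arity L1 (emb c) = arity L c }.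
Arguments emb {L L1} _ _.
Arguments emb_inj {L L1} _ _ _ _.
Arguments emb_arity {L L1} _ _.

Fixpoint tr {L L1 : Lang} (E : Expansion L L1) (f : Fm L) : Fm L1 :=
  match f with
  | Var v => Var v
  | App c args =>
      App (emb E c)
        (fun j => tr E (args (eq_rect _ Fin.t j _ (emb_arity E c))))
  end.

Definition iemb {L L1 : Lang} (E : Expansion L L1) (A : SSet L) : SSet L1 :=
  fun t => exists s, A s /\ forall v, app t (Var v) = tr E (app s (Var v)).

Inductive DomKind : Type :=
| DFm
| DEq
| DSeq (T : nat -> nat -> Prop).

Definition Dom (L : Lang) (k : DomKind) : Type :=
  match k with
  | DFm => Fm L
  | DEq => (Fm L * Fm L)%type
  | DSeq T => { p : list (Fm L) * list (Fm L) | T (length (fst p)) (length (snd p)) }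
  end.

Lemma seq_len_map {L : Lang} (T : nat -> nat -> Prop) (g : Fm L -> Fm L)
  (p : list (Fm L) * list (Fm L)) :
  T (length (fst p)) (length (snd p)) ->
  T (length (fst (map g (fst p), map g (snd p))))
    (length (snd (map g (fst p), map g (snd p)))).
Proof. simpl. rewrite !length_map. exact (fun h => h). Qed.

Definition dsubst {L : Lang} (k : DomKind) (s : Subst L) : Dom L k -> Dom L k :=
  match k as k0 return Dom L k0 -> Dom L k0 with
  | DFm => fun f => app s f
  | DEq => fun p => (app s (fst p), app s (snd p))
  | DSeq T => fun p =>
      exist _ (map (app s) (fst (proj1_sig p)), map (app s) (snd (proj1_sig p)))
            (seq_len_map T (app s) (proj1_sig p) (proj2_sig p))
  end.

Definition pact {L : Lang} (k : DomKind) (a : SSet L) (P : Dom L k -> Prop)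
  : Dom L k -> Prop :=
  fun y => exists s x, a s /\ P x /\ y = dsubst k s x.

Record ConsRel (L : Lang) (k : DomKind) := {
  cr : (Dom L k -> Prop) -> Dom L k -> Prop;
  cr_refl : forall P x, P x -> cr P x;
  cr_mono : forall P Q x, (forall y, P y -> Q y) -> cr P x -> cr Q x;
  cr_cut : forall P Q x, (forall y, Q y -> cr P y) -> cr Q x -> cr P x;
  cr_struct : forall s P x, cr P x -> cr (pact k (fun t => t = s) P) (dsubst k s x) }.
Arguments cr {L k} _ _ _.

Definition gamma {L : Lang} {k : DomKind} (C : ConsRel L k) (P : Dom L k -> Prop)
  : Dom L k -> Prop := cr C P.

Definition Th {L : Lang} {k : DomKind} (C : ConsRel L k) : Type :=
  { P : Dom L k -> Prop | forall x, gamma C P x -> P x }.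

Definition thclose {L : Lang} {k : DomKind} (C : ConsRel L k) (P : Dom L k -> Prop)
  : Th C :=
  exist (fun Q : Dom L k -> Prop => forall x, gamma C Q x -> Q x) (gamma C P)
    (fun x h => cr_cut L k C P (cr C P) x (fun y hy => hy) h).

Definition thjoin {L : Lang} {k : DomKind} (C : ConsRel L k) (F : Th C -> Prop) : Th C :=
  thclose C (fun x => exists u, F u /\ proj1_sig u x).

Definition thact {L : Lang} {k : DomKind} (C : ConsRel L k) (a : SSet L) (u : Th C)
  : Th C := thclose C (pact k a (proj1_sig u)).

Section Tensor.
Context {L L1 : Lang} (E : Expansion L L1) {k : DomKind} (C : ConsRel L k).

Definition Pair : Type := (SSet L1 * Th C)%type.
Definition PSet : Type := Pair -> Prop.      (* the free sup-lattice ℘(M1 × M2) *)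

Definition sing (p : Pair) : PSet := fun q => q = p.

Definition is_suplat_cong (R : PSet -> PSet -> Prop) : Prop :=
  (forall X, R X X) /\
  (forall X Y, R X Y -> R Y X) /\
  (forall X Y Z, R X Y -> R Y Z -> R X Z) /\
  (forall P : (PSet * PSet) -> Prop,
     (forall XY, P XY -> R (fst XY) (snd XY)) ->
     R (fun p => exists XY, P XY /\ fst XY p) (fun p => exists XY, P XY /\ snd XY p)).

Definition tgens (R : PSet -> PSet -> Prop) : Prop :=
  (forall (Xs : SSet L1 -> Prop) (y : Th C),
     R (sing (sunion Xs, y)) (fun p => exists x, Xs x /\ p = (x, y))) /\
  (forall (x : SSet L1) (Ys : Th C -> Prop),
     R (sing (x, thjoin C Ys)) (fun p => exists y, Ys y /\ p = (x, y))) /\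
  (forall (x : SSet L1) (a : SSet L) (y : Th C),
     R (sing (sprod x (iemb E a), y)) (sing (x, thact C a y))).

Definition theta (X Y : PSet) : Prop :=
  forall R, is_suplat_cong R -> tgens R -> R X Y.

Definition Tens : Type :=
  { Cl : PSet -> Prop | exists X, forall Y, Cl Y <-> theta X Y }.

Definition tcls (X : PSet) : Tens :=
  exist (fun Cl : PSet -> Prop => exists X, forall Y, Cl Y <-> theta X Y)
    (theta X) (ex_intro _ X (fun Y => iff_refl (theta X Y))).

(* union of a class (its largest representative) *)
Definition trep (t : Tens) : PSet := fun p => exists X, proj1_sig t X /\ X p.

Definition tjoin (F : Tens -> Prop) : Tens :=
  tcls (fun p => exists t, F t /\ trep t p).

Definition tact (O : SSet L1) (t : Tens) : Tens :=
  tcls (fun p => exists x y, trep t (x, y) /\ p = (sprod O x, y)).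

Definition iact (a : SSet L) (t : Tens) : Tens := tact (iemb E a) t.

End Tensor.

From Stdlib Require Import FunctionalExtensionality PropExtensionality ProofIrrelevance ClassicalEpsilon.

(* The embedding is u ↦ 1 ⊗ u.  It is a homomorphism because the defining relations of the
   tensor product identify 1 ⊗ ⋁uⱼ with ⋁(1 ⊗ uⱼ), and i(a) ⊗ u = 1·i(a) ⊗ u with 1 ⊗ a·u.
   It is injective because Th is a retract of the tensor product: projecting L1-formulas onto
   L-formulas restricts every L1-substitution t to an L-substitution ρ(t) with ρ(id) = id and
   ρ(t ∘ i(s)) = ρ(t) ∘ s, so X ↦ γ(⋃_{(x,u) ∈ X} ρ(x)·u) respects the generating relations,
   hence is defined on the tensor product, and it sends 1 ⊗ u back to u. *)

Lemma set_ext {T : Type} (A B : T -> Prop) : (forall x, A x <-> B x) -> A = B.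
Proof. intros h; apply functional_extensionality; intro x; apply propositional_extensionality, h. Qed.

Lemma sig_ext {A : Type} {P : A -> Prop} (x y : sig P) : proj1_sig x = proj1_sig y -> x = y.
Proof. destruct x, y; apply subset_eq_compat. Qed.

Section Substitutions.
Context {L : Lang}.

Fixpoint substF (g : nat -> Fm L) (f : Fm L) : Fm L :=
  match f with Var v => g v | App c args => App c (fun j => substF g (args j)) end.

Definition mkS (g : nat -> Fm L) : Subst L := exist is_endo (substF g) (fun c args => eq_refl).

Lemma endo_ext (s t : Fm L -> Fm L) : is_endo s -> is_endo t ->
  (forall v, s (Var v) = t (Var v)) -> forall f, s f = t f.
Proof.
  intros hs ht hv f; induction f as [v|c args IH]; [apply hv|].
  rewrite hs, ht; f_equal; apply functional_extensionality; exact IH.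
Qed.

Lemma subst_ext (s t : Subst L) : (forall v, app s (Var v) = app t (Var v)) -> s = t.
Proof.
  intros hv; apply sig_ext, functional_extensionality.
  exact (endo_ext _ _ (proj2_sig s) (proj2_sig t) hv).
Qed.

Definition compS (s t : Subst L) : Subst L :=
  exist is_endo (fun f => app s (app t f))
    (fun c args => eq_trans (f_equal (app s) (proj2_sig t c args)) (proj2_sig s c _)).

Definition idS : Subst L := exist is_endo (fun f => f) (fun c args => eq_refl).

Definition sone : SSet L := fun t => t = idS.

Lemma in_sprod (A B : SSet L) t :
  sprod A B t <-> exists s s', A s /\ B s' /\ t = compS s s'.
Proof.
  split.
  - intros (s & s' & hs & hs' & e). exists s, s'; repeat split; auto.
    apply subst_ext; intro v; apply e.
  - intros (s & s' & hs & hs' & ->). exists s, s'; auto.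
Qed.

Lemma sprod_assoc (A B D : SSet L) : sprod A (sprod B D) = sprod (sprod A B) D.
Proof.
  apply set_ext; intro t; rewrite !in_sprod; split.
  - intros (s & s' & hs & hs' & ->). apply in_sprod in hs' as (b & d & hb & hd & ->).
    exists (compS s b), d; repeat split; auto.
    + apply in_sprod; eauto.
    + apply subst_ext; reflexivity.
  - intros (s' & d & hs' & hd & ->). apply in_sprod in hs' as (s & b & hs & hb & ->).
    exists s, (compS b d); repeat split; auto.
    + apply in_sprod; eauto.
    + apply subst_ext; reflexivity.
Qed.

Lemma sprod_1l (A : SSet L) : sprod sone A = A.
Proof.
  apply set_ext; intro t; rewrite in_sprod; split.
  - intros (s & s' & -> & hs' & ->). replace (compS idS s') with s'; auto.
    apply subst_ext; reflexivity.
  - intros ht. exists idS, t; repeat split; auto. apply subst_ext; reflexivity.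
Qed.

Lemma sprod_1r (A : SSet L) : sprod A sone = A.
Proof.
  apply set_ext; intro t; rewrite in_sprod; split.
  - intros (s & s' & hs & -> & ->). replace (compS s idS) with s; auto.
    apply subst_ext; reflexivity.
  - intros ht. exists t, idS; repeat split; auto. apply subst_ext; reflexivity.
Qed.

Lemma sprod_sunion (O : SSet L) (Xs : SSet L -> Prop) :
  sprod O (sunion Xs) = sunion (fun Z => exists x, Xs x /\ Z = sprod O x).
Proof.
  apply set_ext; intro t; split.
  - intros (s & s' & hs & (X & hX & hs') & e). exists (sprod O X); split; [eauto|].
    exists s, s'; auto.
  - intros (Z & (X & hX & ->) & (s & s' & hs & hs' & e)). exists s, s'; repeat split; auto.
    exists X; auto.
Qed.

End Substitutions.
Arguments idS L : clear implicits.
Arguments sone L : clear implicits.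

Section Actions.
Context {L : Lang} {k : DomKind}.

Lemma dsubst_comp (s t : Subst L) (w : Dom L k) :
  dsubst k (compS s t) w = dsubst k s (dsubst k t w).
Proof.
  destruct k; simpl; auto.
  apply sig_ext; simpl. rewrite !List.map_map. reflexivity.
Qed.

Lemma dsubst_id (w : Dom L k) : dsubst k (idS L) w = w.
Proof.
  destruct k; simpl; auto.
  - destruct w; reflexivity.
  - apply sig_ext; destruct w as [[l1 l2] hw]; simpl. rewrite !List.map_id. reflexivity.
Qed.

Lemma pact_sprod (A B : SSet L) (P : Dom L k -> Prop) :
  pact k (sprod A B) P = pact k A (pact k B P).
Proof.
  apply set_ext; intro d; split.
  - intros (r & w & hr & hw & ->). apply in_sprod in hr as (s & t & hs & ht & ->).
    exists s, (dsubst k t w); repeat split; auto.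
    + exists t, w; auto.
    + apply dsubst_comp.
  - intros (s & w' & hs & (t & w & ht & hw & ->) & ->).
    exists (compS s t), w; repeat split; auto.
    + apply in_sprod; eauto.
    + symmetry; apply dsubst_comp.
Qed.

Lemma pact_1 (P : Dom L k -> Prop) : pact k (sone L) P = P.
Proof.
  apply set_ext; intro d; split.
  - intros (s & w & -> & hw & ->). rewrite dsubst_id; exact hw.
  - intros hd. exists (idS L), d. rewrite dsubst_id. repeat split; auto.
Qed.

End Actions.

Section Nucleus.
Context {L : Lang} {k : DomKind} (C : ConsRel L k).

Lemma gamma_incr (P : Dom L k -> Prop) d : P d -> gamma C P d.
Proof. apply cr_refl. Qed.

Lemma gamma_mono (P Q : Dom L k -> Prop) :
  (forall d, P d -> Q d) -> forall d, gamma C P d -> gamma C Q d.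
Proof. intros h d; apply cr_mono; exact h. Qed.

Lemma gamma_least (P Q : Dom L k -> Prop) :
  (forall d, P d -> gamma C Q d) -> forall d, gamma C P d -> gamma C Q d.
Proof. intros h d; apply cr_cut; exact h. Qed.

Lemma gamma_eq (P Q : Dom L k -> Prop) :
  (forall d, P d -> gamma C Q d) -> (forall d, Q d -> gamma C P d) -> gamma C P = gamma C Q.
Proof. intros h1 h2; apply set_ext; split; apply gamma_least; assumption. Qed.

Lemma gamma_Th (u : Th C) : gamma C (proj1_sig u) = proj1_sig u.
Proof. apply set_ext; split; [apply (proj2_sig u)|apply gamma_incr]. Qed.

Lemma gamma_union_gamma {I : Type} (J : I -> Prop) (A : I -> Dom L k -> Prop) :
  gamma C (fun d => exists i, J i /\ gamma C (A i) d) = gamma C (fun d => exists i, J i /\ A i d).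
Proof.
  apply gamma_eq.
  - intros d (i & hi & hd). revert d hd; apply gamma_mono. eauto.
  - intros d (i & hi & hd). apply gamma_incr. exists i; auto using gamma_incr.
Qed.

(* Structurality [cr_struct] is exactly the nucleus inequality [a γ(P) ⊆ γ(a P)]. *)
Lemma gamma_pact_gamma (a : SSet L) (P : Dom L k -> Prop) :
  gamma C (pact k a (gamma C P)) = gamma C (pact k a P).
Proof.
  apply gamma_eq.
  - intros d (s & w & hs & hw & ->).
    apply (cr_mono L k C (pact k (fun t => t = s) P)).
    + intros y (s' & w' & -> & hw' & ->). exists s, w'; auto.
    + apply cr_struct; exact hw.
  - intros d (s & w & hs & hw & ->). apply gamma_incr. exists s, w; auto using gamma_incr.
Qed.

End Nucleus.

Section Restriction.
Context {L L1 : Lang} (E : Expansion L L1).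

Lemma cast_cancel (n m : nat) (p : n = m) (q : m = n) (j : Fin.t n) :
  eq_rect m Fin.t (eq_rect n Fin.t j m p) n q = j.
Proof. destruct p. rewrite (proof_irrelevance _ q eq_refl). reflexivity. Qed.

Definition pick (d : conn L1) : option {c : conn L | emb E c = d} :=
  match excluded_middle_informative (exists c, emb E c = d) with
  | left h => Some (constructive_indefinite_description _ h)
  | right _ => None
  end.

Lemma pick_emb (c : conn L) : pick (emb E c) = Some (exist _ c eq_refl).
Proof.
  unfold pick. destruct (excluded_middle_informative _) as [h|h].
  - f_equal. destruct (constructive_indefinite_description _ h) as [c' e].
    assert (c' = c) by (apply (emb_inj E); exact e). subst c'.
    f_equal; apply proof_irrelevance.
  - exfalso; apply h; eauto.
Qed.

Definition castA (c : conn L) (d : conn L1) (e : emb E c = d)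
  (j : Fin.t (arity L c)) : Fin.t (arity L1 d) :=
  eq_rect _ Fin.t j _ (eq_trans (eq_sym (emb_arity E c)) (f_equal (arity L1) e)).

(* A left inverse of [tr]; terms headed by a connective outside L go to the junk value [Var 0]. *)
Fixpoint proj (f : Fm L1) : Fm L :=
  match f with
  | Var v => Var v
  | App d args =>
      match pick d with
      | Some (exist _ c e) => App c (fun j => proj (args (castA c d e j)))
      | None => Var 0
      end
  end.

Definition restrS (t : Subst L1) : Subst L := mkS (fun v => proj (app t (Var v))).

Definition extS (s : Subst L) : Subst L1 := mkS (fun v => tr E (app s (Var v))).

Definition restr (O : SSet L1) : SSet L := fun s => exists t, O t /\ s = restrS t.

Lemma proj_subst_tr (t : Subst L1) (phi : Fm L) :
  proj (app t (tr E phi)) = app (restrS t) phi.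
Proof.
  induction phi as [v|c args IH]; [reflexivity|].
  simpl tr. unfold app at 1. rewrite (proj2_sig t).
  cbn [proj]. rewrite pick_emb.
  change (app (restrS t) (App c args)) with (App c (fun j => app (restrS t) (args j))).
  f_equal.
  apply functional_extensionality; intro j. unfold castA. rewrite cast_cancel. apply IH.
Qed.

Lemma restrS_comp_extS (t : Subst L1) (s : Subst L) :
  restrS (compS t (extS s)) = compS (restrS t) s.
Proof. apply subst_ext; intro v. apply proj_subst_tr. Qed.

Lemma restrS_id : restrS (idS L1) = idS L.
Proof. apply subst_ext; reflexivity. Qed.

Lemma in_iemb (a : SSet L) t : iemb E a t <-> exists s, a s /\ t = extS s.
Proof.
  split.
  - intros (s & hs & hv). exists s; split; auto. apply subst_ext; exact hv.
  - intros (s & hs & ->). exists s; split; auto.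
Qed.

Lemma restr_sprod_iemb (x : SSet L1) (a : SSet L) :
  restr (sprod x (iemb E a)) = sprod (restr x) a.
Proof.
  apply set_ext; intro r; rewrite in_sprod; split.
  - intros (tau & htau & ->). apply in_sprod in htau as (t & e & ht & he & ->).
    apply in_iemb in he as (s & hs & ->).
    exists (restrS t), s; repeat split; auto.
    + exists t; auto.
    + apply restrS_comp_extS.
  - intros (r' & s & (t & ht & ->) & hs & ->).
    exists (compS t (extS s)); split.
    + apply in_sprod. exists t, (extS s); repeat split; auto. apply in_iemb; eauto.
    + symmetry; apply restrS_comp_extS.
Qed.

Lemma restr_1 : restr (sone L1) = sone L.
Proof.
  apply set_ext; intro s; split.
  - intros (t & -> & ->). apply restrS_id.
  - intros ->. exists (idS L1); split; [reflexivity|]. symmetry; apply restrS_id.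
Qed.

End Restriction.

Section TensorProduct.
Context {L L1 : Lang} (E : Expansion L L1) {k : DomKind} (C : ConsRel L k).

Local Notation PS := (@PSet L L1 k C).

Lemma cong_union (R : PS -> PS -> Prop) (hR : is_suplat_cong C R)
  {I : Type} (J : I -> Prop) (F G : I -> PS) :
  (forall i, J i -> R (F i) (G i)) ->
  R (fun p => exists i, J i /\ F i p) (fun p => exists i, J i /\ G i p).
Proof.
  intros h. destruct hR as (_ & _ & _ & hu).
  specialize (hu (fun XY => exists i, J i /\ XY = (F i, G i))).
  replace (fun p => exists i, J i /\ F i p)
    with (fun p => exists XY, (exists i, J i /\ XY = (F i, G i)) /\ fst XY p).
  replace (fun p => exists i, J i /\ G i p)
    with (fun p => exists XY, (exists i, J i /\ XY = (F i, G i)) /\ snd XY p).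
  - apply hu. intros XY (i & hi & ->). apply h; exact hi.
  - apply set_ext; intro p; split.
    + intros (XY & (i & hi & ->) & hp). eauto.
    + intros (i & hi & hp). exists (F i, G i); eauto.
  - apply set_ext; intro p; split.
    + intros (XY & (i & hi & ->) & hp). eauto.
    + intros (i & hi & hp). exists (F i, G i); eauto.
Qed.

Lemma theta_cong : is_suplat_cong C (theta E C).
Proof.
  split; [|split; [|split]]; intros *.
  - intros R (hrefl & _) _. apply hrefl.
  - intros h R hR hg. pose proof hR as (_ & hsym & _). apply hsym, h; assumption.
  - intros h1 h2 R hR hg. pose proof hR as (_ & _ & htrans & _).
    apply (htrans _ Y); [apply h1|apply h2]; assumption.
  - intros hP R hR hg. pose proof hR as (_ & _ & _ & hunion).
    apply hunion. intros XY hXY. apply hP; assumption.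
Qed.

Lemma theta_gens : tgens E C (theta E C).
Proof. split; [|split]; intros *; intros R _ hg; apply hg. Qed.

Lemma theta_refl X : theta E C X X.
Proof. exact (proj1 theta_cong X). Qed.

Lemma theta_sym X Y : theta E C X Y -> theta E C Y X.
Proof. exact (proj1 (proj2 theta_cong) X Y). Qed.

Lemma theta_trans X Y Z : theta E C X Y -> theta E C Y Z -> theta E C X Z.
Proof. exact (proj1 (proj2 (proj2 theta_cong)) X Y Z). Qed.

Lemma tcls_eq X Y : tcls E C X = tcls E C Y <-> theta E C X Y.
Proof.
  split.
  - intros h. apply (f_equal (@proj1_sig _ _)) in h. simpl in h.
    rewrite h. apply theta_refl.
  - intros h. apply sig_ext, set_ext; intro Z; simpl; split.
    + apply theta_trans, theta_sym, h.
    + apply theta_trans, h.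
Qed.

Lemma theta_trep_tcls X : theta E C (trep E C (tcls E C X)) X.
Proof.
  apply (theta_trans _ (fun p => exists Y, theta E C X Y /\ X p)).
  - apply (cong_union _ theta_cong). intros Y hY. apply theta_sym, hY.
  - replace (fun p => exists Y, theta E C X Y /\ X p) with X; [apply theta_refl|].
    apply set_ext; intro p; split; [|intros (Y & _ & hp); exact hp].
    intros hp; exists X; split; [apply theta_refl|exact hp].
Qed.

Lemma tjoin_tcls {I : Type} (J : I -> Prop) (F : I -> PS) :
  tjoin E C (fun t => exists i, J i /\ t = tcls E C (F i))
  = tcls E C (fun p => exists i, J i /\ F i p).
Proof.
  apply tcls_eq.
  replace (fun p => exists t, (exists i, J i /\ t = tcls E C (F i)) /\ trep E C t p)
    with (fun p => exists i, J i /\ trep E C (tcls E C (F i)) p).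
  - apply (cong_union _ theta_cong). intros i _. apply theta_trep_tcls.
  - apply set_ext; intro p; split.
    + intros (i & hi & hp). eauto.
    + intros (t & (i & hi & ->) & hp). eauto.
Qed.

Definition lmulP (O : SSet L1) (X : PS) : PS :=
  fun p => exists x y, X (x, y) /\ p = (sprod O x, y).

Lemma lmulP_sing (O : SSet L1) x y : lmulP O (sing C (x, y)) = sing C (sprod O x, y).
Proof.
  apply set_ext; intro p; unfold sing; split.
  - intros (x' & y' & e & ->). injection e as -> ->. reflexivity.
  - intros ->. exists x, y; auto.
Qed.

Lemma lmulP_union (O : SSet L1) {I : Type} (J : I -> Prop) (F : I -> PS) :
  lmulP O (fun p => exists i, J i /\ F i p) = fun p => exists i, J i /\ lmulP O (F i) p.
Proof.
  apply set_ext; intro p; split.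
  - intros (x & y & (i & hi & hxy) & ->). exists i; split; auto. exists x, y; auto.
  - intros (i & hi & (x & y & hxy & ->)). exists x, y; split; eauto.
Qed.

Lemma lmulP_gens (O : SSet L1) :
  tgens E C (fun X Y => theta E C (lmulP O X) (lmulP O Y)).
Proof.
  split; [|split].
  - intros Xs y. rewrite lmulP_sing, sprod_sunion.
    replace (lmulP O (fun p => exists x, Xs x /\ p = (x, y)))
      with (fun p => exists Z, (fun Z => exists x, Xs x /\ Z = sprod O x) Z /\ p = (Z, y)).
    + apply theta_gens.
    + apply set_ext; intro p; split.
      * intros (Z & (x & hx & ->) & ->). exists x, y; eauto.
      * intros (x' & y' & (x & hx & e) & ->). injection e as -> ->. eauto.
  - intros x Ys. rewrite lmulP_sing.
    replace (lmulP O (fun p => exists y, Ys y /\ p = (x, y)))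
      with (fun p => exists y, Ys y /\ p = (sprod O x, y)).
    + apply theta_gens.
    + apply set_ext; intro p; split.
      * intros (y & hy & ->). exists x, y; eauto.
      * intros (x' & y' & (y & hy & e) & ->). injection e as -> ->. eauto.
  - intros x a y. rewrite !lmulP_sing, sprod_assoc. apply theta_gens.
Qed.

Lemma theta_lmulP (O : SSet L1) X Y :
  theta E C X Y -> theta E C (lmulP O X) (lmulP O Y).
Proof.
  intros h. apply h; [|apply lmulP_gens].
  split; [|split; [|split]].
  - intros; apply theta_refl.
  - intros; apply theta_sym; auto.
  - intros; eapply theta_trans; eauto.
  - intros P hP. rewrite (lmulP_union O P fst), (lmulP_union O P snd).
    apply (cong_union _ theta_cong). exact hP.
Qed.

Lemma tact_tcls (O : SSet L1) X : tact E C O (tcls E C X) = tcls E C (lmulP O X).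
Proof. apply tcls_eq, theta_lmulP, theta_trep_tcls. Qed.

End TensorProduct.

Section Embedding.
Context {L L1 : Lang} (E : Expansion L L1) {k : DomKind} (C : ConsRel L k).

Local Notation PS := (@PSet L L1 k C).

Definition pairs_act (X : PS) : Dom L k -> Prop :=
  fun d => exists x y, X (x, y) /\ pact k (restr E x) (proj1_sig y) d.

Definition retract (X : PS) : Dom L k -> Prop := gamma C (pairs_act X).

Lemma pairs_act_sing x y : pairs_act (sing C (x, y)) = pact k (restr E x) (proj1_sig y).
Proof.
  apply set_ext; intro d; unfold sing; split.
  - intros (x' & y' & e & hd). injection e as -> ->. exact hd.
  - intros hd. exists x, y; auto.
Qed.

Lemma retract_union {I : Type} (J : I -> Prop) (F : I -> PS) :
  retract (fun p => exists i, J i /\ F i p) = gamma C (fun d => exists i, J i /\ retract (F i) d).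
Proof.
  unfold retract. rewrite gamma_union_gamma. f_equal.
  apply set_ext; intro d; split.
  - intros (x & y & (i & hi & hxy) & hd). exists i; split; auto. exists x, y; auto.
  - intros (i & hi & (x & y & hxy & hd)). exists x, y; split; eauto.
Qed.

Lemma retract_kernel_cong : is_suplat_cong C (fun X Y => retract X = retract Y).
Proof.
  split; [|split; [|split]].
  - reflexivity.
  - intros X Y h; symmetry; exact h.
  - intros X Y Z h1 h2; rewrite h1; exact h2.
  - intros P hP. rewrite (retract_union P fst), (retract_union P snd). f_equal.
    apply set_ext; intro d; split; intros (XY & hXY & hd); exists XY;
      [rewrite <- hP|rewrite hP]; auto.
Qed.

Lemma retract_kernel_gens : tgens E C (fun X Y => retract X = retract Y).
Proof.
  unfold retract; split; [|split].
  - intros Xs y. rewrite pairs_act_sing. f_equal.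
    apply set_ext; intro d; split.
    + intros (s & w & (t & (x & hx & ht) & ->) & hw & ->).
      exists x, y; split; eauto. exists (restrS E t), w; repeat split; auto. exists t; auto.
    + intros (x' & y' & (x & hx & e) & (s & w & (t & ht & ->) & hw & ->)).
      injection e as -> ->. exists (restrS E t), w; repeat split; auto.
      exists t; split; auto. exists x; auto.
  - intros x Ys. rewrite pairs_act_sing. simpl proj1_sig. rewrite gamma_pact_gamma. f_equal.
    apply set_ext; intro d; split.
    + intros (s & w & hs & (u & hu & hw) & ->). exists x, u; split; eauto. exists s, w; auto.
    + intros (x' & y & (u & hu & e) & (s & w & hs & hw & ->)).
      injection e as -> ->. exists s, w; repeat split; eauto.
  - intros x a y. rewrite !pairs_act_sing. simpl proj1_sig.
    rewrite restr_sprod_iemb, pact_sprod, gamma_pact_gamma. reflexivity.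
Qed.

Lemma theta_retract X Y : theta E C X Y -> retract X = retract Y.
Proof. intros h; apply h; [apply retract_kernel_cong|apply retract_kernel_gens]. Qed.

Lemma retract_one (u : Th C) : retract (sing C (sone L1, u)) = proj1_sig u.
Proof. unfold retract. rewrite pairs_act_sing, restr_1, pact_1. apply gamma_Th. Qed.

Definition tensor_one (u : Th C) : Tens E C := tcls E C (sing C (sone L1, u)).

Lemma tensor_one_inj u v : tensor_one u = tensor_one v -> u = v.
Proof.
  intros h. apply tcls_eq, theta_retract in h. rewrite !retract_one in h.
  apply sig_ext; exact h.
Qed.

Lemma tensor_one_join (F : Th C -> Prop) :
  tensor_one (thjoin C F) = tjoin E C (fun t => exists u, F u /\ t = tensor_one u).
Proof.
  unfold tensor_one. rewrite (tjoin_tcls E C F (fun u => sing C (sone L1, u))).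
  apply tcls_eq. eapply theta_trans; [apply theta_gens|].
  replace (fun p => exists u, F u /\ p = (sone L1, u))
    with (fun p => exists u, F u /\ sing C (sone L1, u) p); [apply theta_refl|].
  apply set_ext; intro p; unfold sing; tauto.
Qed.

Lemma tensor_one_act (a : SSet L) (u : Th C) :
  tensor_one (thact C a u) = iact E C a (tensor_one u).
Proof.
  unfold iact, tensor_one. rewrite tact_tcls, lmulP_sing, sprod_1r.
  rewrite <- (sprod_1l (iemb E a)).
  apply tcls_eq, theta_sym, theta_gens.
Qed.

End Embedding.

Theorem theorem3p3 (L L1 : Lang) (E : Expansion L L1) (k : DomKind) (C : ConsRel L k) :
  exists (S : Tens E C -> Prop) (f : Th C -> Tens E C),
    (* S is a ℘Σ_L-submodule of (℘Σ_L1 ⊗ Th)_i *)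
    (forall F : Tens E C -> Prop, (forall t, F t -> S t) -> S (tjoin E C F)) /\
    (forall (a : SSet L) (t : Tens E C), S t -> S (iact E C a t)) /\
    (* f is a bijection from Th onto S *)
    (forall u, S (f u)) /\
    (forall t, S t -> exists u, f u = t) /\
    (forall u v, f u = f v -> u = v) /\
    (* f is a ℘Σ_L-module homomorphism *)
    (forall F : Th C -> Prop,
        f (thjoin C F) = tjoin E C (fun t => exists u, F u /\ t = f u)) /\
    (forall (a : SSet L) (u : Th C), f (thact C a u) = iact E C a (f u)).
Proof.
  exists (fun t => exists u, tensor_one E C u = t), (tensor_one E C).
  repeat split.
  - intros F hF. exists (thjoin C (fun u => F (tensor_one E C u))).
    rewrite tensor_one_join. f_equal. apply set_ext; intro t; split.
    + intros (u & hu & ->); exact hu.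
    + intros ht. destruct (hF t ht) as (u & <-). eauto.
  - intros a t (u & <-). exists (thact C a u). apply tensor_one_act.
  - intros u; exists u; reflexivity.
  - intros t ht; exact ht.
  - apply tensor_one_inj.
  - apply tensor_one_join.
  - apply tensor_one_act.
Qed.
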